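(* Let $M>0$ and $E\in(\sqrt{25/27},1)$. Let $W(r;H,L)=\frac12\bigl(\frac{L^2}{r^2}-2H\bigr)\bigl(1-\frac{2M}{r}\bigr)$ for $r>2M$, $Z(r;H,L)=W(r;H,L)-\frac12E^2$, $\widetilde\Lambda=\{(H,L): H<0,\ L>4\sqrt2\sqrt{-H}M\}$, $r_0(H,L)=\dfrac{L^2+L\sqrt{L^2+24HM^2}}{-4HM}$, $\omega_0(H,L)=-W(r_0(H,L);H,L)$, and $$\Lambda_E=\Bigl\{(H,L)\in\widetilde\Lambda:\ -\omega_0(H,L)<\tfrac12E^2<-H\Bigr\}.$$ Then $$\Lambda_E=\Bigl\{(H,L)\in\mathbb{R}^2:\ -\tfrac{27}{50}E^2<H<-\tfrac12E^2,\ \ 4\sqrt2\sqrt{-H}\,M<L<\sqrt{-H}\,M\,\zeta^{-1}\Bigl(\frac{E^2}{-2H}\Bigr)\Bigr\}.$$ Moreover: (i) for every $(H,L)\in\Lambda_E$, $Z(r_0(H,L);H,L)<0$, $Z'(r_0(H,L);H,L)=0$, $Z''(r_0(H,L);H,L)>0$; (ii) there exist continuous functions $r_-,r_+\colon\Lambda_E\to(0,+\infty)$ with $r_-<r_0<r_+$ such that, for every $(H,L)\in\Lambda_E$, $Z(r_\pm(H,L);H,L)=0$ and $Z'(r;H,L)(r-r_0(H,L))>0$ for every $r\in[r_-(H,L),r_+(H,L)]\setminus\{r_0(H,L)\}$.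
   Context: Derivatives ${}'$ are with respect to $r$. The function $\zeta\colon(4\sqrt2,+\infty)\to\mathbb{R}$ is $\zeta(u)=\dfrac{u^4-20u^2+32+u(u^2-8)\sqrt{u^2-24}}{u^4-18u^2+u(u^2-6)\sqrt{u^2-24}}$; it is strictly increasing with image $(25/27,1)$, and $\zeta^{-1}$ denotes its inverse. *)

From Stdlib Require Import Reals Lra ClassicalEpsilon.
From Coquelicot Require Import Coquelicot.
Open Scope R_scope.

(* zeta : (4 sqrt 2, +oo) -> R  (formula evaluated for any real u) *)
Definition zeta (u : R) : R :=
  (u^4 - 20*u^2 + 32 + u*(u^2 - 8)*sqrt (u^2 - 24)) /
  (u^4 - 18*u^2 + u*(u^2 - 6)*sqrt (u^2 - 24)).

(* Inverse of zeta: the u in (4 sqrt 2, +oo) with zeta u = y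
   (unique for y in (25/27,1) since zeta is strictly increasing there). *)
Definition zeta_inv (y : R) : R :=
  epsilon (inhabits 0) (fun u => 4 * sqrt 2 < u /\ zeta u = y).

Definition W (M H L r : R) : R :=
  / 2 * (L^2 / r^2 - 2*H) * (1 - 2*M / r).

Definition Zf (M E H L r : R) : R := W M H L r - / 2 * E^2.

Definition r0 (M H L : R) : R :=
  (L^2 + L * sqrt (L^2 + 24*H*M^2)) / (- 4*H*M).

Definition omega0 (M H L : R) : R := - W M H L (r0 M H L).

Definition LambdaT (M H L : R) : Prop :=
  H < 0 /\ 4 * sqrt 2 * sqrt (- H) * M < L.

Definition LambdaE (M E H L : R) : Prop :=
  LambdaT M H L /\ - omega0 M H L < / 2 * E^2 < - H.

(** Write [u = L / (sqrt (-H) * M)]. The numerator [dZnum r = r^4 Z'(r)] is a convex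
    quadratic in [r], negative at [4M], whose larger root is [r0]. Along circular
    orbits ([dZnum r = 0]) one has [W = -H * ecirc (r/M)], and [r0 / M = xcirc u];
    hence [-omega0 = -H * zeta u] with [zeta = ecirc o xcirc] increasing, which turns
    the condition [-omega0 < E^2/2] into [u < zeta_inv (E^2 / (-2H))].
    Next, [Z] decreases on [[4M, r0]] and increases on [[r0, +oo)]; it is positive at
    [4M] and far out, negative at [r0], so it has exactly one zero [rm] on the left
    and one zero [rp] on the right of [r0]. Since [Z r] is affine in [H] and [L^2],
    strict sign conditions at fixed radii around [rm] or [rp] persist for nearby
    [(H, L)], which traps the zeros there: this is the continuity of [rm] and [rp]. *)

From Stdlib Require Import Reals Ranalysis5 Lra Nsatz ClassicalEpsilon.
From Coquelicot Require Import Coquelicot.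
Open Scope R_scope.

Lemma IVT_open (f : R -> R) a b : a < b ->
  (forall x, a <= x <= b -> continuity_pt f x) -> f a * f b < 0 ->
  exists z, a < z < b /\ f z = 0.
Proof.
  intros Hab Hf Hsign.
  destruct (Rlt_or_le (f a) 0) as [Ha | Ha].
  - destruct (IVT_interv f a b Hf Hab Ha) as (z & Hz & Hfz); [nra|].
    exists z. split; [|exact Hfz].
    split; apply Rnot_le_lt; intros Hle;
      [replace z with a in Hfz | replace z with b in Hfz]; nra.
  - destruct (IVT_interv (- f)%F a b) as (z & Hz & Hfz); unfold opp_fct in *.
    + intros x Hx. apply continuity_pt_opp, Hf, Hx.
    + exact Hab.
    + destruct (Req_dec (f a) 0) as [Heq|]; [rewrite Heq in Hsign|]; nra.
    + nra.
    + exists z. split; [|lra].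
      split; apply Rnot_le_lt; intros Hle;
        [replace z with a in Hfz | replace z with b in Hfz]; nra.
Qed.

Lemma filterlim_locally_of_intervals {T : Type} (F : (T -> Prop) -> Prop) {FF : Filter F}
  (f : T -> R) (y : R) :
  (forall a b, a < y < b -> F (fun x => a < f x < b)) -> filterlim f F (locally y).
Proof.
  intros Hint. apply filterlim_locally. intros eps.
  apply (filter_imp (fun x => y - eps < f x < y + eps)).
  - intros x Hx. change (Rabs (f x - y) < eps). apply Rabs_def1; lra.
  - apply Hint. pose proof (cond_pos eps). lra.
Qed.

Lemma locally_lt_of_continuous {T : UniformSpace} (f : T -> R) (x : T) (c : R) :
  continuous f x -> f x < c -> locally x (fun z => f z < c).
Proof. intros Hf Hc. exact (Hf (fun y => y < c) (open_lt c (f x) Hc)). Qed.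

Lemma locally_gt_of_continuous {T : UniformSpace} (f : T -> R) (x : T) (c : R) :
  continuous f x -> c < f x -> locally x (fun z => c < f z).
Proof. intros Hf Hc. exact (Hf (fun y => c < y) (open_gt c (f x) Hc)). Qed.

Lemma continuous_affine_Lsq (c0 c1 c2 : R) (p : R * R) :
  continuous (fun q : R * R => c0 + c1 * fst q + c2 * snd q ^ 2) p.
Proof.
  apply (continuous_plus (fun q : R * R => c0 + c1 * fst q) (fun q : R * R => c2 * snd q ^ 2)).
  - apply (continuous_plus (fun _ : R * R => c0) (fun q : R * R => c1 * fst q)).
    + apply continuous_const.
    + apply (continuous_mult (fun _ : R * R => c1) (fun q : R * R => fst q)).
      * apply continuous_const.
      * apply continuous_fst.
  - apply (continuous_mult (fun _ : R * R => c2) (fun q : R * R => snd q ^ 2)).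
    + apply continuous_const.
    + apply (continuous_mult (fun q : R * R => snd q) (fun q : R * R => snd q * 1)).
      * apply continuous_snd.
      * apply (continuous_mult (fun q : R * R => snd q) (fun _ : R * R => 1)).
        -- apply continuous_snd.
        -- apply continuous_const.
Qed.

(** * The function [zeta] *)

Definition ecirc (x : R) : R := (x - 2)^2 / (x * (x - 3)).

Definition xcirc (u : R) : R := (u^2 + u * sqrt (u^2 - 24)) / 4.

Lemma ecirc_increasing x y : 6 < x -> x < y -> ecirc x < ecirc y.
Proof.
  intros Hx Hxy.
  assert (Hdiff : ecirc y - ecirc x
                  = (y - x) * ((x - 4) * (y - 4) - 4) / ((x * (x - 3)) * (y * (y - 3)))).
  { unfold ecirc; field; split; nra. }
  assert (0 < (y - x) * ((x - 4) * (y - 4) - 4) / ((x * (x - 3)) * (y * (y - 3)))).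
  { apply Rdiv_lt_0_compat; apply Rmult_lt_0_compat; nra. }
  lra.
Qed.

Lemma ecirc_12 : ecirc 12 = 25/27.
Proof. unfold ecirc; field. Qed.

Lemma ecirc_surj y : 25/27 < y < 1 -> exists x, 12 < x /\ ecirc x = y.
Proof.
  intros Hy.
  (* For [x > 3], [ecirc x = y] iff [q x = 0]. *)
  set (q := fun x => (1 - y) * x^2 + (3*y - 4) * x + 4).
  set (b := 12 + 4 / (1 - y)).
  assert (Hb : (1 - y) * b = 12 * (1 - y) + 4) by (unfold b; field; lra).
  assert (H12b : 12 < b) by (assert (0 < 4 / (1 - y)) by (apply Rdiv_lt_0_compat; lra); unfold b; lra).
  destruct (IVT q 12 b) as [x [Hx Hqx]]; [intro; unfold q; reg | lra | unfold q; nra | unfold q; nra |].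
  assert (Hx12 : 12 < x) by (destruct (Req_dec x 12) as [->|]; unfold q in Hqx; lra).
  exists x; split; [exact Hx12|].
  unfold ecirc, q in *. apply (Rmult_eq_reg_r (x * (x - 3))); [|nra].
  field_simplify; nra.
Qed.

Lemma gt_4sqrt2_iff u : 4 * sqrt 2 < u <-> 0 < u /\ 32 < u^2.
Proof.
  pose proof (sqrt_sqrt 2) as H2. pose proof (sqrt_pos 2).
  split; [intros; split; nra|].
  intros [Hu Hu2]. destruct (Rlt_or_le (4 * sqrt 2) u); [assumption | nra].
Qed.

Lemma xcirc_root u : 0 < u -> 32 < u^2 ->
  12 < xcirc u /\ u^2 / 4 <= xcirc u /\ 2 * xcirc u ^ 2 - u^2 * xcirc u + 3 * u^2 = 0.
Proof.
  intros Hu Hu2. unfold xcirc.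
  set (s := sqrt (u^2 - 24)).
  assert (Hs : s * s = u^2 - 24) by (apply sqrt_sqrt; lra).
  assert (0 <= s) by apply sqrt_pos.
  split; [nra|]. split; [nra|].
  field_simplify. replace (s^2) with (s * s) by ring. rewrite Hs. field.
Qed.

Lemma xcirc_unique u t : 0 < u -> 32 < u^2 ->
  2 * t^2 - u^2 * t + 3 * u^2 = 0 -> u^2 / 4 <= t -> t = xcirc u.
Proof.
  intros Hu Hu2 Ht Htu.
  destruct (xcirc_root u Hu Hu2) as (_ & Hxu & Hx).
  assert (Hprod : (t - xcirc u) * (2 * (t + xcirc u) - u^2) = 0) by nra.
  destruct (Rmult_integral _ _ Hprod); lra.
Qed.

Lemma zeta_ecirc u : 0 < u -> 32 < u^2 -> zeta u = ecirc (xcirc u).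
Proof.
  intros Hu Hu2.
  destruct (xcirc_root u Hu Hu2) as (Hx12 & _ & _).
  set (s := sqrt (u^2 - 24)).
  assert (Hs : s * s = u * u - 24) by (unfold s; rewrite sqrt_sqrt; nra).
  assert (0 <= s) by apply sqrt_pos.
  assert (HX : 4 * xcirc u = u * u + u * s) by (unfold xcirc, s; field).
  unfold zeta, ecirc. fold s. set (X := xcirc u) in *. clearbody X.
  set (D := u^4 - 18*u^2 + u*(u^2 - 6)*s).
  assert (HD : 0 < D).
  { assert (0 <= u * (u^2 - 6) * s) by (apply Rmult_le_pos; [apply Rmult_le_pos|]; nra).
    unfold D; nra. }
  assert (Hcross : (u^4 - 20*u^2 + 32 + u*(u^2 - 8)*s) * (X * (X - 3)) = (X - 2)^2 * D).
  { unfold D. clear - Hs HX. simpl. nsatz. }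
  transitivity ((X - 2)^2 * D / (D * (X * (X - 3)))).
  - rewrite <- Hcross. field. split; nra.
  - field. split; nra.
Qed.

Lemma xcirc_increasing u v : 0 < u -> 32 < u^2 -> u < v -> xcirc u < xcirc v.
Proof.
  intros Hu Hu2 Huv. unfold xcirc.
  assert (sqrt (u^2 - 24) <= sqrt (v^2 - 24)) by (apply sqrt_le_1; nra).
  pose proof (sqrt_pos (u^2 - 24)).
  nra.
Qed.

Lemma xcirc_surj x : 12 < x -> exists u, 4 * sqrt 2 < u /\ xcirc u = x.
Proof.
  intros Hx.
  set (w := 2 * x^2 / (x - 3)).
  assert (Hw : w * (x - 3) = 2 * x^2) by (unfold w; field; lra).
  assert (Hw32 : 32 < w) by nra.
  assert (Hu2 : sqrt w ^ 2 = w) by (rewrite <- Rsqr_pow2; apply Rsqr_sqrt; lra).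
  assert (Hu : 0 < sqrt w) by (apply sqrt_lt_R0; lra).
  exists (sqrt w). rewrite gt_4sqrt2_iff, Hu2.
  split; [lra|].
  symmetry. apply xcirc_unique; rewrite ?Hu2; [lra | lra | nra |].
  apply (Rmult_le_reg_r (4 * (x - 3))); nra.
Qed.

Lemma zeta_increasing u v : 4 * sqrt 2 < u -> u < v -> zeta u < zeta v.
Proof.
  intros Hu Huv. apply gt_4sqrt2_iff in Hu as [Hu Hu2].
  assert (Hv : 0 < v /\ 32 < v^2) by (split; nra).
  rewrite (zeta_ecirc u), (zeta_ecirc v) by tauto.
  pose proof (xcirc_root u Hu Hu2).
  apply ecirc_increasing; [lra | apply xcirc_increasing; assumption].
Qed.

Lemma zeta_gt u : 4 * sqrt 2 < u -> 25/27 < zeta u.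
Proof.
  intros Hu. apply gt_4sqrt2_iff in Hu as [Hu Hu2].
  rewrite zeta_ecirc, <- ecirc_12 by assumption.
  pose proof (xcirc_root u Hu Hu2).
  apply ecirc_increasing; lra.
Qed.

Lemma zeta_inv_spec y : 25/27 < y < 1 -> 4 * sqrt 2 < zeta_inv y /\ zeta (zeta_inv y) = y.
Proof.
  intros Hy. unfold zeta_inv. apply epsilon_spec.
  destruct (ecirc_surj y Hy) as (x & Hx & <-).
  destruct (xcirc_surj x Hx) as (u & Hu & <-).
  exists u. split; [exact Hu|].
  apply zeta_ecirc; apply gt_4sqrt2_iff; exact Hu.
Qed.

Lemma lt_zeta_inv_iff u y : 25/27 < y < 1 -> 4 * sqrt 2 < u ->
  u < zeta_inv y <-> zeta u < y.
Proof.
  intros Hy Hu. destruct (zeta_inv_spec y Hy) as [Hinv Hzinv].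
  split; intros H.
  - rewrite <- Hzinv. apply zeta_increasing; assumption.
  - destruct (Rlt_or_le u (zeta_inv y)) as [|Hle]; [assumption|].
    destruct (Rle_lt_or_eq _ _ Hle) as [Hlt | Heq]; [|rewrite Heq in Hzinv; lra].
    pose proof (zeta_increasing _ _ Hinv Hlt). lra.
Qed.

(** * Circular orbits *)

Definition dZnum (M H L r : R) : R := -2*H*M*r^2 - L^2*r + 3*M*L^2.

Lemma is_derive_Zf M E H L r : r <> 0 -> is_derive (Zf M E H L) r (dZnum M H L r / r^4).
Proof.
  intros Hr. unfold Zf, W. auto_derive.
  - split; [change (r^2 <> 0); apply pow_nonzero | split]; tauto.
  - unfold dZnum. field. assumption.
Qed.

Lemma Derive_Zf M E H L r : r <> 0 -> Derive (Zf M E H L) r = dZnum M H L r / r^4.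
Proof. intros Hr. apply is_derive_unique, is_derive_Zf, Hr. Qed.

Lemma Derive2_Zf M E H L r : 0 < r ->
  Derive (Derive (Zf M E H L)) r = (-4*H*M*r - L^2) / r^4 - 4 * dZnum M H L r / r^5.
Proof.
  intros Hr.
  rewrite (Derive_ext_loc _ (fun t => dZnum M H L t / t^4)).
  - apply is_derive_unique. unfold dZnum. auto_derive.
    + change (r^4 <> 0). apply pow_nonzero. lra.
    + field. lra.
  - apply (locally_interval _ r 0 p_infty); [exact Hr | exact I|].
    intros t Ht _. apply Derive_Zf. simpl in Ht. lra.
Qed.

Section CircularOrbit.

Variables M H L : R.
Hypothesis hM : 0 < M.
Hypothesis hT : LambdaT M H L.

Lemma LambdaT_bounds : H < 0 /\ 0 < L /\ 32 * (-H) * M^2 < L^2.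
Proof.
  destruct hT as [hH hL].
  pose proof (sqrt_sqrt 2) as H2. pose proof (sqrt_sqrt (-H)) as HH.
  assert (0 < sqrt 2) by (apply sqrt_lt_R0; lra).
  assert (0 < sqrt (-H)) by (apply sqrt_lt_R0; lra).
  assert (0 < 4 * sqrt 2 * sqrt (-H) * M) by (repeat apply Rmult_lt_0_compat; lra).
  split; [lra|]. split; [lra|].
  replace (32 * (-H) * M^2) with ((4 * sqrt 2 * sqrt (-H) * M)^2); [nra|].
  replace ((4 * sqrt 2 * sqrt (-H) * M)^2)
    with (16 * (sqrt 2 * sqrt 2) * (sqrt (-H) * sqrt (-H)) * M^2) by ring.
  rewrite H2, HH by lra. ring.
Qed.

Lemma u_sq : (L / (sqrt (-H) * M))^2 = L^2 / (-H * M^2).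
Proof.
  destruct hT as [hH _].
  assert (0 < sqrt (-H)) by (apply sqrt_lt_R0; lra).
  replace (-H) with (sqrt (-H) * sqrt (-H)) at 2 by (apply sqrt_sqrt; lra).
  field; split; lra.
Qed.

Lemma LambdaT_u_bounds :
  0 < L / (sqrt (-H) * M) /\ 32 < (L / (sqrt (-H) * M))^2.
Proof.
  destruct LambdaT_bounds as (hH & hL & hL2).
  assert (Hs : 0 < sqrt (-H)) by (apply sqrt_lt_R0; lra).
  split; [apply Rdiv_lt_0_compat; nra|].
  assert (HM2 : 0 < -H * M^2) by (apply Rmult_lt_0_compat; [lra | apply pow_lt; lra]).
  rewrite u_sq. apply (Rlt_div_r 32 (L^2) (-H * M^2) HM2). lra.
Qed.

Lemma r0_spec : dZnum M H L (r0 M H L) = 0 /\ L^2 < -4*H*M * r0 M H L /\ 8*M < r0 M H L.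
Proof.
  destruct LambdaT_bounds as (hH & hL & hL2).
  set (q := sqrt (L^2 + 24*H*M^2)).
  assert (Hq : q * q = L^2 + 24*H*M^2) by (apply sqrt_sqrt; nra).
  assert (Hq0 : 0 < q) by (apply sqrt_lt_R0; nra).
  assert (Hr : r0 M H L * (-4*H*M) = L^2 + L*q) by (unfold r0; fold q; field; nra).
  set (r := r0 M H L) in *. clearbody r.
  assert (0 < L * q) by (apply Rmult_lt_0_compat; lra).
  assert (HLr : L^2 < -4*H*M * r) by lra.
  split; [|split; [exact HLr|]].
  - apply (Rmult_eq_reg_l (8*H*M)); [|nra].
    unfold dZnum. rewrite Rmult_0_r. clear - Hq Hr. simpl in *. nsatz.
  - apply (Rmult_lt_reg_l (-4*H*M)); nra.
Qed.

Lemma W_circular r : 3*M < r -> dZnum M H L r = 0 -> W M H L r = -H * ecirc (r / M).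
Proof.
  intros Hr HP. unfold dZnum in HP.
  assert (HL : L^2 = -2*H*M*r^2 / (r - 3*M)).
  { apply (Rmult_eq_reg_r (r - 3*M)); [field_simplify; nra | lra]. }
  unfold W, ecirc. rewrite HL. field. repeat split; nra.
Qed.

Lemma r0_xcirc : r0 M H L / M = xcirc (L / (sqrt (-H) * M)).
Proof.
  destruct LambdaT_bounds as (hH & hL & hL2).
  destruct r0_spec as (HP & Hr0 & Hr8).
  destruct LambdaT_u_bounds as [Hu Hu2].
  apply xcirc_unique; [assumption | assumption | |]; rewrite u_sq.
  - transitivity (dZnum M H L (r0 M H L) / (-H * M^3)).
    + unfold dZnum. field. lra.
    + rewrite HP. unfold Rdiv. ring.
  - assert (Hdiff : r0 M H L / M - L^2 / (-H * M^2) / 4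
                    = (-4*H*M * r0 M H L - L^2) / (-4*H*M^2)) by (field; lra).
    assert (0 < (-4*H*M * r0 M H L - L^2) / (-4*H*M^2)).
    { apply Rdiv_lt_0_compat; [lra|]. apply Rmult_lt_0_compat; [lra | apply pow_lt; lra]. }
    lra.
Qed.

Lemma omega0_zeta : omega0 M H L = H * zeta (L / (sqrt (-H) * M)).
Proof.
  destruct r0_spec as (HP & _ & Hr8).
  destruct LambdaT_u_bounds as [Hu Hu2].
  unfold omega0. rewrite W_circular, r0_xcirc, <- zeta_ecirc by (assumption || lra).
  ring.
Qed.

Lemma dZnum_sign r : 4*M <= r -> r <> r0 M H L -> 0 < dZnum M H L r * (r - r0 M H L).
Proof.
  intros Hr Hr0.
  destruct LambdaT_bounds as (hH & hL & hL2).
  destruct r0_spec as (HP & _ & Hr8).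
  set (s := r0 M H L) in *.
  assert (Hfactor : forall t, dZnum M H L t = (t - s) * (-2*H*M*(t + s) - L^2)).
  { intros t. rewrite <- (Rminus_0_r (dZnum M H L t)), <- HP. unfold dZnum. ring. }
  assert (Hk4M : 0 < -2*H*M*(4*M + s) - L^2).
  { assert (HP4 : dZnum M H L (4*M) < 0) by (unfold dZnum; nra).
    rewrite Hfactor in HP4. nra. }
  assert (Hk : 0 < -2*H*M*(r + s) - L^2) by nra.
  rewrite Hfactor.
  replace ((r - s) * (-2*H*M*(r + s) - L^2) * (r - s))
    with ((r - s) * (r - s) * (-2*H*M*(r + s) - L^2)) by ring.
  apply Rmult_lt_0_compat; [|exact Hk].
  assert (r - s <> 0) by lra. nra.
Qed.

Lemma dZnum_neg_iff r : 4*M <= r -> dZnum M H L r < 0 <-> r < r0 M H L.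
Proof.
  intros Hr. destruct r0_spec as (HP & _ & _).
  destruct (Req_dec r (r0 M H L)) as [-> | Hne]; [split; lra|].
  pose proof (dZnum_sign r Hr Hne).
  split; intros; nra.
Qed.

Lemma dZnum_pos_iff r : 4*M <= r -> 0 < dZnum M H L r <-> r0 M H L < r.
Proof.
  intros Hr. destruct r0_spec as (HP & _ & _).
  destruct (Req_dec r (r0 M H L)) as [-> | Hne]; [split; lra|].
  pose proof (dZnum_sign r Hr Hne).
  split; intros; nra.
Qed.

End CircularOrbit.

Lemma LambdaE_zeta M E H L : 0 < M -> LambdaT M H L ->
  LambdaE M E H L <-> zeta (L / (sqrt (-H) * M)) < E^2 / (-2*H) < 1.
Proof.
  intros hM hT. pose proof hT as [hH _].
  unfold LambdaE. rewrite omega0_zeta by assumption.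
  rewrite <- (Rlt_div_r _ _ (-2*H)), (Rlt_div_l _ _ (-2*H)) by lra.
  split; [intros [_ ?] | intros ?; split; [exact hT|]]; lra.
Qed.

Lemma energy_ratio_bounds_iff E H : H < 0 ->
  - (27/50) * E^2 < H < - / 2 * E^2 <-> 25/27 < E^2 / (-2*H) < 1.
Proof.
  intros hH.
  rewrite <- (Rlt_div_r _ _ (-2*H)), (Rlt_div_l _ _ (-2*H)) by lra.
  split; intros; lra.
Qed.

Lemma LambdaE_iff M E H L : 0 < M ->
  LambdaE M E H L <->
  (- (27/50) * E^2 < H < - / 2 * E^2 /\
   4 * sqrt 2 * sqrt (- H) * M < L < sqrt (- H) * M * zeta_inv (E^2 / (- 2 * H))).
Proof.
  intros hM.
  assert (Hu_lt : forall z, H < 0 ->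
            L < sqrt (-H) * M * z <-> L / (sqrt (-H) * M) < z).
  { intros z hH. assert (0 < sqrt (-H) * M) by (apply Rmult_lt_0_compat; [apply sqrt_lt_R0|]; lra).
    rewrite Rlt_div_l, Rmult_comm by assumption. reflexivity. }
  split.
  - intros HE. assert (hT : LambdaT M H L) by apply HE.
    pose proof hT as [hH hL].
    apply LambdaE_zeta in HE as [Hz Hy1]; [|assumption..].
    pose proof (LambdaT_u_bounds M H L hM hT) as Hu. rewrite <- gt_4sqrt2_iff in Hu.
    pose proof (zeta_gt _ Hu) as Hz0.
    rewrite energy_ratio_bounds_iff, Hu_lt, lt_zeta_inv_iff by (assumption || lra).
    repeat split; lra.
  - intros [Hy [hL HL]].
    assert (hH : H < 0) by (pose proof (pow2_ge_0 E); lra).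
    rewrite energy_ratio_bounds_iff in Hy by assumption.
    assert (HT : LambdaT M H L) by (split; assumption).
    pose proof (LambdaT_u_bounds M H L hM HT) as Hu. rewrite <- gt_4sqrt2_iff in Hu.
    rewrite Hu_lt, lt_zeta_inv_iff in HL by assumption.
    apply LambdaE_zeta; [assumption..| split; tauto].
Qed.

(** * Turning points *)

Lemma Zf_continuity_pt M E H L r : r <> 0 -> continuity_pt (Zf M E H L) r.
Proof.
  intros Hr. apply derivable_continuous_pt.
  exists (dZnum M H L r / r^4). apply is_derive_Reals, is_derive_Zf, Hr.
Qed.

Lemma Zf_MVT M E H L a b : 0 < a < b ->
  exists c, a < c < b /\ Zf M E H L b - Zf M E H L a = Derive (Zf M E H L) c * (b - a).
Proof.
  intros Hab.
  destruct (MVT_cor2 (Zf M E H L) (Derive (Zf M E H L)) a b) as (c & Hc & Hcab);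
    [lra | | exists c; split; assumption].
  intros c Hc. apply is_derive_Reals. rewrite Derive_Zf by lra. apply is_derive_Zf. lra.
Qed.

Section ShapeOfZ.

Variables M E H L : R.
Hypothesis hM : 0 < M.
Hypothesis hT : LambdaT M H L.

Lemma Zf_derivative_sign r : 4*M <= r -> r <> r0 M H L ->
  0 < Derive (Zf M E H L) r * (r - r0 M H L).
Proof.
  intros Hr Hr0. rewrite Derive_Zf by lra.
  pose proof (dZnum_sign M H L hM hT r Hr Hr0).
  assert (0 < / r^4) by (apply Rinv_0_lt_compat, pow_lt; lra).
  unfold Rdiv. replace (dZnum M H L r * / r^4 * (r - r0 M H L))
    with (dZnum M H L r * (r - r0 M H L) * / r^4) by ring.
  apply Rmult_lt_0_compat; assumption.
Qed.

Lemma Derive_Zf_r0 : Derive (Zf M E H L) (r0 M H L) = 0.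
Proof.
  destruct (r0_spec M H L hM hT) as (HP & _ & Hr8).
  rewrite Derive_Zf, HP by lra. unfold Rdiv. ring.
Qed.

Lemma Derive2_Zf_r0_pos : 0 < Derive (Derive (Zf M E H L)) (r0 M H L).
Proof.
  destruct (r0_spec M H L hM hT) as (HP & HLr & Hr8).
  rewrite Derive2_Zf, HP by lra.
  assert (0 < (-4*H*M * r0 M H L - L^2) / r0 M H L ^ 4)
    by (apply Rdiv_lt_0_compat; [lra | apply pow_lt; lra]).
  unfold Rdiv in *. lra.
Qed.

Lemma Zf_decreasing a b : 4*M <= a -> a < b -> b <= r0 M H L -> Zf M E H L b < Zf M E H L a.
Proof.
  intros Ha Hab Hb.
  destruct (Zf_MVT M E H L a b) as (c & Hc & Hmvt); [lra|].
  pose proof (Zf_derivative_sign c). nra.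
Qed.

Lemma Zf_increasing a b : r0 M H L <= a -> a < b -> Zf M E H L a < Zf M E H L b.
Proof.
  intros Ha Hab. destruct (r0_spec M H L hM hT) as (_ & _ & Hr8).
  destruct (Zf_MVT M E H L a b) as (c & Hc & Hmvt); [lra|].
  pose proof (Zf_derivative_sign c). nra.
Qed.

End ShapeOfZ.

Definition rm (M E H L : R) : R :=
  epsilon (inhabits 0) (fun r => 4*M < r < r0 M H L /\ Zf M E H L r = 0).

Definition rp (M E H L : R) : R :=
  epsilon (inhabits 0) (fun r => r0 M H L < r /\ Zf M E H L r = 0).

Section TurningPoints.

Variables M E H L : R.
Hypothesis hM : 0 < M.
Hypothesis hE : LambdaE M E H L.

Let hT : LambdaT M H L := proj1 hE.

Lemma Zf_r0_neg : Zf M E H L (r0 M H L) < 0.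
Proof.
  pose proof hE as [_ [Homega _]]. unfold omega0 in Homega. unfold Zf. lra.
Qed.

Lemma Zf_4M_pos : 0 < Zf M E H L (4*M).
Proof.
  pose proof hE as [_ [_ HE2]].
  destruct (LambdaT_bounds M H L hM hT) as (hH & _ & hL2).
  assert (HL : -2*H < L^2 / (4*M)^2).
  { apply (Rlt_div_r (-2*H) (L^2) ((4*M)^2)); [apply pow_lt; lra|].
    replace (-2*H*(4*M)^2) with (32*(-H)*M^2) by ring. exact hL2. }
  unfold Zf, W. replace (1 - 2*M / (4*M)) with (/ 2) by (field; lra).
  lra.
Qed.

Lemma Zf_pos_far r : 4*(-H)*M / (2*(-H) - E^2) < r -> 0 < Zf M E H L r.
Proof.
  intros Hr.
  pose proof hE as [_ [_ HE2]].
  destruct (LambdaT_bounds M H L hM hT) as (hH & _ & _).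
  set (k := 2*(-H) - E^2) in *.
  assert (Hk : 0 < k) by (unfold k; lra).
  apply Rlt_div_l in Hr; [|exact Hk].
  assert (Hr2M : 2*M < r) by (pose proof (pow2_ge_0 E); unfold k in Hr; nra).
  assert (HZ : Zf M E H L r = (L^2 * (r - 2*M) / r^3 + (r*k - 4*(-H)*M) / r) / 2).
  { unfold Zf, W, k. field. lra. }
  rewrite HZ.
  assert (0 <= L^2 * (r - 2*M) / r^3).
  { apply Rmult_le_pos; [apply Rmult_le_pos; [apply pow2_ge_0 | lra]|].
    apply Rlt_le, Rinv_0_lt_compat, pow_lt. lra. }
  assert (0 < (r*k - 4*(-H)*M) / r) by (apply Rdiv_lt_0_compat; lra).
  lra.
Qed.

Lemma rm_spec : 4*M < rm M E H L < r0 M H L /\ Zf M E H L (rm M E H L) = 0.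
Proof.
  unfold rm. apply epsilon_spec.
  destruct (r0_spec M H L hM hT) as (_ & _ & Hr8).
  destruct (IVT_open (Zf M E H L) (4*M) (r0 M H L)) as (z & Hz & Hfz).
  - lra.
  - intros x Hx. apply Zf_continuity_pt. lra.
  - pose proof Zf_4M_pos. pose proof Zf_r0_neg. nra.
  - exists z. split; [exact Hz | exact Hfz].
Qed.

Lemma rp_spec : r0 M H L < rp M E H L /\ Zf M E H L (rp M E H L) = 0.
Proof.
  unfold rp. apply epsilon_spec.
  destruct (r0_spec M H L hM hT) as (_ & _ & Hr8).
  set (Rfar := r0 M H L + 4*(-H)*M / (2*(-H) - E^2)).
  assert (Hfar : 0 < Zf M E H L Rfar) by (apply Zf_pos_far; unfold Rfar; lra).
  destruct (IVT_open (Zf M E H L) (r0 M H L) Rfar) as (z & Hz & Hfz).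
  - pose proof hE as [_ [_ HE2]]. pose proof hT as [hH _].
    assert (0 < 4*(-H)*M / (2*(-H) - E^2)) by (apply Rdiv_lt_0_compat; nra).
    unfold Rfar. lra.
  - intros x Hx. apply Zf_continuity_pt. lra.
  - pose proof Zf_r0_neg. nra.
  - exists z. split; [lra | exact Hfz].
Qed.

Lemma rm_unique r : 4*M < r < r0 M H L -> Zf M E H L r = 0 -> r = rm M E H L.
Proof.
  intros Hr HZ. destruct rm_spec as [Hrm HZm].
  destruct (Rtotal_order r (rm M E H L)) as [Hlt | [Heq | Hgt]]; [|exact Heq|].
  - pose proof (Zf_decreasing M E H L hM hT r (rm M E H L)). lra.
  - pose proof (Zf_decreasing M E H L hM hT (rm M E H L) r). lra.
Qed.

Lemma rp_unique r : r0 M H L < r -> Zf M E H L r = 0 -> r = rp M E H L.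
Proof.
  intros Hr HZ. destruct rp_spec as [Hrp HZp].
  destruct (Rtotal_order r (rp M E H L)) as [Hlt | [Heq | Hgt]]; [|exact Heq|].
  - pose proof (Zf_increasing M E H L hM hT r (rp M E H L)). lra.
  - pose proof (Zf_increasing M E H L hM hT (rp M E H L) r). lra.
Qed.

Lemma turning_points_spec :
  0 < rm M E H L /\ 0 < rp M E H L /\
  rm M E H L < r0 M H L < rp M E H L /\
  Zf M E H L (rm M E H L) = 0 /\ Zf M E H L (rp M E H L) = 0 /\
  (forall r : R, rm M E H L <= r <= rp M E H L -> r <> r0 M H L ->
     0 < Derive (Zf M E H L) r * (r - r0 M H L)).
Proof.
  destruct rm_spec as [Hrm HZm]. destruct rp_spec as [Hrp HZp].
  repeat split; try lra; try assumption.
  intros r Hr Hne. apply (Zf_derivative_sign M E H L hM hT); lra.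
Qed.

End TurningPoints.

(** * Continuity of the turning points *)

Lemma Zf_continuous_HL M E r p : r <> 0 ->
  continuous (fun q : R * R => Zf M E (fst q) (snd q) r) p.
Proof.
  intros Hr.
  assert (Hext : forall q : R * R, - / 2 * E^2 + (2*M / r - 1) * fst q
                   + (r - 2*M) / (2 * r^3) * snd q ^ 2 = Zf M E (fst q) (snd q) r).
  { intros q. unfold Zf, W. field. exact Hr. }
  exact (continuous_ext _ _ p Hext (continuous_affine_Lsq _ _ _ p)).
Qed.

Lemma dZnum_continuous_HL M r p : continuous (fun q : R * R => dZnum M (fst q) (snd q) r) p.
Proof.
  assert (Hext : forall q : R * R,
            0 + (-2*M*r^2) * fst q + (3*M - r) * snd q ^ 2 = dZnum M (fst q) (snd q) r).
  { intros q. unfold dZnum. ring. }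
  exact (continuous_ext _ _ p Hext (continuous_affine_Lsq _ _ _ p)).
Qed.

Section Continuity.

Variables M E : R.
Hypothesis hM : 0 < M.

Lemma rm_continuous H L : LambdaE M E H L ->
  filterlim (fun q : R * R => rm M E (fst q) (snd q))
    (within (fun q : R * R => LambdaE M E (fst q) (snd q)) (locally (H, L))) (locally (rm M E H L)).
Proof.
  intros hE. pose proof (proj1 hE) as hT.
  destruct (rm_spec M E H L hM hE) as [Hrm HZ].
  apply filterlim_locally_of_intervals; [apply within_filter, locally_filter|]. intros a b Hab.
  set (a' := Rmax a ((4*M + rm M E H L) / 2)).
  set (b' := Rmin b ((rm M E H L + r0 M H L) / 2)).
  assert (Ha' : a <= a' /\ 4*M < a' < rm M E H L).
  { unfold a'. pose proof (Rmax_l a ((4*M + rm M E H L) / 2)). pose proof (Rmax_r a ((4*M + rm M E H L) / 2)).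
    split; [assumption|]. split; [lra|]. apply Rmax_lub_lt; lra. }
  assert (Hb' : b' <= b /\ rm M E H L < b' < r0 M H L).
  { unfold b'. pose proof (Rmin_l b ((rm M E H L + r0 M H L) / 2)). pose proof (Rmin_r b ((rm M E H L + r0 M H L) / 2)).
    split; [assumption|]. split; [apply Rmin_glb_lt|]; lra. }
  assert (Hnear : locally (H, L) (fun q => 0 < Zf M E (fst q) (snd q) a' /\
                    Zf M E (fst q) (snd q) b' < 0 /\ dZnum M (fst q) (snd q) b' < 0)).
  { repeat apply filter_and.
    - apply locally_gt_of_continuous; [apply Zf_continuous_HL; lra|].
      rewrite <- HZ. apply (Zf_decreasing M E H L hM hT); lra.
    - apply locally_lt_of_continuous; [apply Zf_continuous_HL; lra|].
      rewrite <- HZ. apply (Zf_decreasing M E H L hM hT); lra.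
    - apply locally_lt_of_continuous; [apply dZnum_continuous_HL|].
      apply (dZnum_neg_iff M H L hM hT); lra. }
  unfold within. revert Hnear. apply filter_imp. intros [H' L'] (HZa & HZb & HPb) hE'. simpl in *.
  pose proof (proj1 hE') as hT'.
  apply (dZnum_neg_iff M H' L' hM hT') in HPb; [|lra].
  destruct (IVT_open (Zf M E H' L') a' b') as (z & Hz & HZz).
  - lra.
  - intros x Hx. apply Zf_continuity_pt. lra.
  - nra.
  - rewrite <- (rm_unique M E H' L' hM hE' z); [lra | lra | exact HZz].
Qed.

Lemma rp_continuous H L : LambdaE M E H L ->
  filterlim (fun q : R * R => rp M E (fst q) (snd q))
    (within (fun q : R * R => LambdaE M E (fst q) (snd q)) (locally (H, L))) (locally (rp M E H L)).
Proof.
  intros hE. pose proof (proj1 hE) as hT.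
  destruct (rp_spec M E H L hM hE) as [Hrp HZ].
  destruct (r0_spec M H L hM hT) as (_ & _ & Hr8).
  apply filterlim_locally_of_intervals; [apply within_filter, locally_filter|]. intros a b Hab.
  set (a' := Rmax a ((r0 M H L + rp M E H L) / 2)).
  assert (Ha' : a <= a' /\ r0 M H L < a' < rp M E H L).
  { unfold a'. pose proof (Rmax_l a ((r0 M H L + rp M E H L) / 2)). pose proof (Rmax_r a ((r0 M H L + rp M E H L) / 2)).
    split; [assumption|]. split; [lra|]. apply Rmax_lub_lt; lra. }
  assert (Hnear : locally (H, L) (fun q => Zf M E (fst q) (snd q) a' < 0 /\
                    0 < Zf M E (fst q) (snd q) b /\ 0 < dZnum M (fst q) (snd q) a')).
  { repeat apply filter_and.
    - apply locally_lt_of_continuous; [apply Zf_continuous_HL; lra|].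
      rewrite <- HZ. apply (Zf_increasing M E H L hM hT); lra.
    - apply locally_gt_of_continuous; [apply Zf_continuous_HL; lra|].
      rewrite <- HZ. apply (Zf_increasing M E H L hM hT); lra.
    - apply locally_gt_of_continuous; [apply dZnum_continuous_HL|].
      apply (dZnum_pos_iff M H L hM hT); lra. }
  unfold within. revert Hnear. apply filter_imp. intros [H' L'] (HZa & HZb & HPa) hE'. simpl in *.
  pose proof (proj1 hE') as hT'.
  apply (dZnum_pos_iff M H' L' hM hT') in HPa; [|lra].
  destruct (IVT_open (Zf M E H' L') a' b) as (z & Hz & HZz).
  - lra.
  - intros x Hx. apply Zf_continuity_pt. lra.
  - nra.
  - rewrite <- (rp_unique M E H' L' hM hE' z); [lra | lra | exact HZz].
Qed.

End Continuity.

Theorem proposition4p3 (M E : R) (hM : 0 < M) (hE : sqrt (25/27) < E < 1) :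
  (forall H L : R,
     LambdaE M E H L <->
     (- (27/50) * E^2 < H < - / 2 * E^2 /\
      4 * sqrt 2 * sqrt (- H) * M < L < sqrt (- H) * M * zeta_inv (E^2 / (- 2 * H))))
  /\
  (forall H L : R, LambdaE M E H L ->
     Zf M E H L (r0 M H L) < 0 /\
     Derive (Zf M E H L) (r0 M H L) = 0 /\
     0 < Derive (Derive (Zf M E H L)) (r0 M H L))
  /\
  (exists rm rp : R -> R -> R,
     (forall H L : R, LambdaE M E H L ->
        0 < rm H L /\ 0 < rp H L /\
        rm H L < r0 M H L < rp H L /\
        Zf M E H L (rm H L) = 0 /\ Zf M E H L (rp H L) = 0 /\
        (forall r : R, rm H L <= r <= rp H L -> r <> r0 M H L ->
           0 < Derive (Zf M E H L) r * (r - r0 M H L)))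
     /\
     (forall H L : R, LambdaE M E H L ->
        filterlim (fun p : R * R => rm (fst p) (snd p))
          (within (fun p : R * R => LambdaE M E (fst p) (snd p)) (locally (H, L)))
          (locally (rm H L)))
     /\
     (forall H L : R, LambdaE M E H L ->
        filterlim (fun p : R * R => rp (fst p) (snd p))
          (within (fun p : R * R => LambdaE M E (fst p) (snd p)) (locally (H, L)))
          (locally (rp H L)))).
Proof.
  split; [intros H L; apply LambdaE_iff, hM|].
  split.
  - intros H L hE'. pose proof (proj1 hE') as hT.
    split; [|split]; [apply Zf_r0_neg | apply Derive_Zf_r0 | apply Derive2_Zf_r0_pos];
      assumption.
  - exists (rm M E), (rp M E).
    split; [|split]; intros H L hE'.
    + apply turning_points_spec; assumption.
    + apply rm_continuous; assumption.
    + apply rp_continuous; assumption.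
Qed.
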